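(* Let $L$ be a multisorted algebra in the positive quantifier-free signature satisfying axioms (0), (1), (2). Let $k_1+\dots+k_m=n$, let $c_i\colon k_i\to n$ ($i=1,\dots,m$) be the partitioning cylindrifications, and for each $i$ let $F^i$ be a prime filter on sort $k_i$ of $L$. Then there is a prime filter $G$ on sort $n$ of $L$ such that for each $i=1,\dots,m$ and every $r$ of sort $k_i$, we have $c_i(r)\in G$ if and only if $r\in F^i$.
   Context: Signature. There is a sort $n$ for each natural number $n\ge 0$. For every function $\alpha\colon\{1,\dots,n\}\to\{1,\dots,k\}$ there is a unary function symbol (''substitution'') $\alpha\colon n\to k$ (argument of sort $n$, value of sort $k$). For each sort there are constants $0,1$ and binary operations $\vee,\wedge$ (the positive quantifier-free signature). Partitioning cylindrifications: given $k_1,\dots,k_m$ and $n=k_1+\dots+k_m$, the substitutions $c_i\colon k_i\to n$ given by the functions $c_i(l)=l+\sum_{j<i}k_j$. In an algebra, $x\le y$ (also $y\ge x$) means $x=x\wedge y$. Axioms: (0) For all partitioning cylindrifications $c_1,\dots,c_m$, $c_i\colon k_i\to k_1+\dots+k_m$, and all $r_i,s_i$ of sort $k_i$: if $\bigvee_{i=1}^m c_i(s_i)\ge\bigwedge_{i=1}^m c_i(r_i)$ then $s_i\ge r_i$ for some $i$ (including the case $m=0$, which says $0\ge1$ fails in sort $0$). (1) Each sort is a bounded distributive lattice under $0,1,\vee,\wedge$. (2) Every substitution preserves $0,1,\vee,\wedge$. A prime filter of a bounded distributive lattice is a proper, nonempty, upward-closed subset closed under $\wedge$ such that $x\vee y\in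 F$ implies $x\in F$ or $y\in F$. The Boolean prime ideal theorem is assumed. *)

From mathcomp Require Import all_boot.
Set Implicit Arguments. Unset Strict Implicit. Unset Printing Implicit Defensive.

(* A multisorted algebra in the positive quantifier-free signature:
   one sort [car n] for each natural number n; for every function
   alpha : {1..n} -> {1..k} (rendered 0-indexed as 'I_n -> 'I_k) a unary
   substitution symbol from sort n to sort k; constants 0,1 and binary
   operations join (\/), meet (/\) on every sort. *)
Record MAlg := {
  car : nat -> Type;
  zero : forall n, car n;
  one : forall n, car n;
  join : forall n, car n -> car n -> car n;
  meet : forall n, car n -> car n -> car n;
  subst : forall n k, ('I_n -> 'I_k) -> car n -> car k
}.

Section Defs.
Variable L : MAlg.

Definition le n (x y : car L n) : Prop := x = meet x y.

Definition offset m (k : 'I_m -> nat) (i : 'I_m) : nat :=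
  \sum_(j < m | (j < i)%N) k j.

Lemma cyl_proof m (k : 'I_m -> nat) (i : 'I_m) (l : 'I_(k i)) :
  (l + offset k i < \sum_(j < m) k j)%N.
Proof.
rewrite /offset [X in (_ < X)%N](bigID (fun j : 'I_m => (j < i)%N)) /= [X in (X < _)%N]addnC ltn_add2l.
rewrite (bigD1 i) ?ltnn //=.
by apply: (leq_trans (ltn_ord l)); apply: leq_addr.
Qed.

Definition cyl m (k : 'I_m -> nat) (i : 'I_m) : 'I_(k i) -> 'I_(\sum_(j < m) k j) :=
  fun l => Ordinal (cyl_proof l).

(* Axiom (1): every sort is a bounded distributive lattice. *)
Definition bdl_axioms : Prop :=
  forall n, 
  (forall x y z : car L n, join x (join y z) = join (join x y) z) /\
  (forall x y z : car L n, meet x (meet y z) = meet (meet x y) z) /\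
  (forall x y : car L n, join x y = join y x) /\
  (forall x y : car L n, meet x y = meet y x) /\
  (forall x y : car L n, join x (meet x y) = x) /\
  (forall x y : car L n, meet x (join x y) = x) /\
  (forall x y z : car L n, meet x (join y z) = join (meet x y) (meet x z)) /\
  (forall x : car L n, join x (zero L n) = x) /\
  (forall x : car L n, meet x (one L n) = x).

(* Axiom (2): every substitution preserves 0, 1, join, meet. *)
Definition subst_axioms : Prop :=
  forall n k (a : 'I_n -> 'I_k),
  [/\ subst a (zero L n) = zero L k,
      subst a (one L n) = one L k,
      forall x y : car L n, subst a (join x y) = join (subst a x) (subst a y)
    & forall x y : car L n, subst a (meet x y) = meet (subst a x) (subst a y)].

Definition axiom0 : Prop :=
  forall m (k : 'I_m -> nat) (r s : forall i : 'I_m, car L (k i)),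
    le (\big[@meet L _/one L _]_(i < m) @subst L _ _ (@cyl m k i) (r i))
       (\big[@join L _/zero L _]_(i < m) @subst L _ _ (@cyl m k i) (s i)) ->
    exists i : 'I_m, le (r i) (s i).

Definition axioms : Prop := [/\ axiom0, bdl_axioms & subst_axioms].

Definition prime_filter n (F : car L n -> Prop) : Prop :=
  [/\ exists x, ~ F x,
      exists x, F x,
      forall x y, F x -> le x y -> F y,
      forall x y, F x -> F y -> F (meet x y)
    & forall x y, F (join x y) -> F x \/ F y].

End Defs.

From mathcomp Require Import ssreflect ssrfun ssrbool eqtype ssrnat seq fintype bigop.
From mathcomp Require classical_sets.
From Stdlib Require Import Classical.

Set Implicit Arguments. Unset Strict Implicit. Unset Printing Implicit Defensive.

(* Inside sort n, the cylindrifications of the F^i generate a filter H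
   (all x above some meet of c_i(r_i) with r_i in F^i) and the complements of
   the F^i generate an ideal I (all x below some join of c_i(s_i) with s_i not
   in F^i).  Axiom (0) says exactly that H and I are disjoint, so the prime
   filter theorem gives a prime filter G containing H and missing I; then
   c_i(r) is in G iff r is in F^i, because c_i(r) lies in H when r is in F^i
   and in I otherwise. *)

Section Lattice.
Variables (L : MAlg) (hB : bdl_axioms L).
Context {n : nat}.
Implicit Types x y z : car L n.

Lemma meetA : associative (@meet L n).
Proof. by case: (hB n) => _ [mA _]. Qed.
Lemma meetC : commutative (@meet L n).
Proof. by case: (hB n) => _ [_ [_ [mC _]]]. Qed.
Lemma joinC : commutative (@join L n).
Proof. by case: (hB n) => _ [_ [jC _]]. Qed.
Lemma joinKI x y : join x (meet x y) = x.
Proof. by case: (hB n) => _ [_ [_ [_ [jK _]]]]. Qed.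
Lemma meetKU x y : meet x (join x y) = x.
Proof. by case: (hB n) => _ [_ [_ [_ [_ [mK _]]]]]. Qed.
Lemma meetUr x y z : meet x (join y z) = join (meet x y) (meet x z).
Proof. by case: (hB n) => _ [_ [_ [_ [_ [_ [mD _]]]]]]. Qed.
Lemma joinx0 x : join x (zero L n) = x.
Proof. by case: (hB n) => _ [_ [_ [_ [_ [_ [_ [j0 _]]]]]]]. Qed.
Lemma meetx1 x : meet x (one L n) = x.
Proof. by case: (hB n) => _ [_ [_ [_ [_ [_ [_ [_ m1]]]]]]]. Qed.

Lemma meetxx x : meet x x = x.
Proof. by have := meetKU x (meet x x); rewrite joinKI. Qed.

Lemma le_refl x : le x x.
Proof. by rewrite /le meetxx. Qed.

Lemma le_trans x y z : le x y -> le y z -> le x z.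
Proof. by rewrite /le => exy eyz; rewrite {2}exy -meetA -eyz -exy. Qed.

Lemma leIl x y : le (meet x y) x.
Proof. by rewrite /le (meetC _ x) meetA meetxx. Qed.

Lemma leIr x y : le (meet x y) y.
Proof. by rewrite /le -meetA meetxx. Qed.

Lemma lexI x y z : le x y -> le x z -> le x (meet y z).
Proof. by rewrite /le => exy exz; rewrite meetA -exy. Qed.

Lemma lex1 x : le x (one L n).
Proof. by rewrite /le meetx1. Qed.

Lemma leUl x y : le x (join x y).
Proof. by rewrite /le meetKU. Qed.

Lemma leUr x y : le y (join x y).
Proof. by rewrite /le joinC meetKU. Qed.

Lemma le0x x : le (zero L n) x.
Proof. by have := meetKU (zero L n) x; rewrite joinC joinx0. Qed.

Lemma leUx x y z : le x z -> le y z -> le (join x y) z.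
Proof.
by rewrite /le => exz eyz; rewrite meetC meetUr (meetC z x) (meetC z y) -exz -eyz.
Qed.

Lemma leI2 x y x' y' : le x y -> le x' y' -> le (meet x x') (meet y y').
Proof.
move=> le_xy le_xy'.
by apply: lexI; [apply: le_trans (leIl _ _) le_xy | apply: le_trans (leIr _ _) le_xy'].
Qed.

Lemma leU2 x y x' y' : le x y -> le x' y' -> le (join x x') (join y y').
Proof.
move=> le_xy le_xy'.
by apply: leUx; [apply: le_trans le_xy (leUl _ _) | apply: le_trans le_xy' (leUr _ _)].
Qed.

Notation bigmeet m f := (\big[@meet L n/one L n]_(i < m) f i).
Notation bigjoin m f := (\big[@join L n/zero L n]_(i < m) f i).

Lemma le_bigmeet m (f g : 'I_m -> car L n) :
  (forall i, le (f i) (g i)) -> le (bigmeet m f) (bigmeet m g).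
Proof.
elim: m f g => [|m IH] f g le_fg; first by rewrite !big_ord0; apply: le_refl.
by rewrite !big_ord_recl; apply: leI2 => //; apply: IH.
Qed.

Lemma le_bigjoin m (f g : 'I_m -> car L n) :
  (forall i, le (f i) (g i)) -> le (bigjoin m f) (bigjoin m g).
Proof.
elim: m f g => [|m IH] f g le_fg; first by rewrite !big_ord0; apply: le_refl.
by rewrite !big_ord_recl; apply: leU2 => //; apply: IH.
Qed.

Lemma bigmeet_inf m (f : 'I_m -> car L n) i : le (bigmeet m f) (f i).
Proof.
elim: m f i => [|m IH] f i; first by case: i.
rewrite big_ord_recl; case: (unliftP ord0 i) => [j ->|->]; last exact: leIl.
exact: le_trans (leIr _ _) (IH _ _).
Qed.

Lemma bigjoin_sup m (f : 'I_m -> car L n) i : le (f i) (bigjoin m f).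
Proof.
elim: m f i => [|m IH] f i; first by case: i.
rewrite big_ord_recl; case: (unliftP ord0 i) => [j ->|->]; last exact: leUl.
exact: le_trans (IH _ _) (leUr _ _).
Qed.

End Lattice.

Section PrimeFilterTheorem.
Variable L : MAlg.

Definition is_filter n (F : car L n -> Prop) : Prop :=
  [/\ F (one L n),
      forall x y, F x -> le x y -> F y
    & forall x y, F x -> F y -> F (meet x y)].

Definition is_ideal n (I : car L n -> Prop) : Prop :=
  [/\ I (zero L n),
      forall x y, I y -> le x y -> I x
    & forall x y, I x -> I y -> I (join x y)].

Lemma exists_maximal_filter n (H I : car L n -> Prop) :
  is_filter H -> (forall x, H x -> ~ I x) ->
  exists A, [/\ is_filter A, (forall x, H x -> A x), (forall x, A x -> ~ I x)
              & forall B, is_filter B -> (forall x, A x -> B x) -> (forall x, B x -> ~ I x) ->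
                  (forall x, B x -> A x)].
Proof.
move=> filH disjHI.
pose good X := [/\ is_filter X, (forall x, H x -> X x) & forall x, X x -> ~ I x].
(* Zorn's lemma also needs an upper bound for the empty chain; hence the
   hypothesis "X is inhabited", which the empty set satisfies vacuously. *)
have [A [goodA maxA]] : exists A, ((exists x, A x) -> good A) /\
    forall B, classical_sets.proper A B -> ~ ((exists x, B x) -> good B).
  apply: classical_sets.Zorn_bigcup => C goodC totC [x [X CX Xx]].
  have goodX Y y : C Y -> Y y -> good Y by move=> CY Yy; apply: goodC CY _; exists y.
  have [[X1 _ _] HX _] := goodX _ _ CX Xx.
  split; first split.
  - by exists X.
  - move=> y z [Y CY Yy] le_yz; exists Y => //.
    by have [[_ upY _] _ _] := goodX _ _ CY Yy; apply: upY le_yz.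
  - move=> y z [Y CY Yy] [Z CZ Zz].
    have [YZ|ZY] := totC Y Z CY CZ.
      by exists Z => //; have [[_ _ mZ] _ _] := goodX _ _ CZ Zz; apply: mZ (YZ _ Yy) Zz.
    by exists Y => //; have [[_ _ mY] _ _] := goodX _ _ CY Yy; apply: mY Yy (ZY _ Zz).
  - by move=> y Hy; exists X => //; apply: HX.
  - by move=> y [Y CY Yy]; have [_ _ disjY] := goodX _ _ CY Yy; apply: disjY.
have [x0 Ax0] : exists x, A x.
  have [H1 _ _] := filH.
  apply: NNPP => emptyA; apply: (maxA H); last by move=> _; split.
  by split=> [x Ax|HsubA]; case: emptyA; [exists x | exists (one L n); apply: HsubA].
have [filA HA disjA] := goodA (ex_intro _ x0 Ax0).
exists A; split=> // B filB AB disjB x Bx; apply: NNPP => nAx.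
apply: (maxA B); first by split=> // BA; apply: nAx; apply: BA.
by move=> _; split=> // y /HA /AB.
Qed.

Variable hB : bdl_axioms L.

Lemma prime_filter_filter n (F : car L n -> Prop) : prime_filter F -> is_filter F.
Proof.
by case=> _ [x Fx] upF mF _; split=> //; apply: upF Fx (lex1 hB x).
Qed.

Lemma prime_filter_compl_ideal n (F : car L n -> Prop) :
  prime_filter F -> is_ideal (fun x => ~ F x).
Proof.
case=> [[x nFx] _ upF _ primeF]; split.
- by move=> F0; apply: nFx; apply: upF F0 (le0x hB x).
- by move=> y z nFz le_yz Fy; apply: nFz; apply: upF Fy le_yz.
- by move=> y z nFy nFz /primeF [].
Qed.

Definition filter_adjoin n (A : car L n -> Prop) (a : car L n) x :=
  exists2 y, A y & le (meet y a) x.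

Lemma filter_adjoin_filter n (A : car L n -> Prop) a :
  is_filter A -> is_filter (filter_adjoin A a).
Proof.
case=> A1 _ mA; split.
- by exists (one L n) => //; apply: (lex1 hB).
- by move=> x y [z Az le_za] le_xy; exists z => //; apply: (le_trans hB le_za le_xy).
- move=> x y [z Az le_zx] [z' Az' le_zy]; exists (meet z z'); first exact: mA.
  apply: (lexI hB).
    by apply: (le_trans hB _ le_zx); apply: (leI2 hB _ (le_refl hB a)); apply: (leIl hB).
  by apply: (le_trans hB _ le_zy); apply: (leI2 hB _ (le_refl hB a)); apply: (leIr hB).
Qed.

Lemma maximal_filter_prime n (A I : car L n -> Prop) :
  is_filter A -> is_ideal I -> (forall x, A x -> ~ I x) ->
  (forall B, is_filter B -> (forall x, A x -> B x) -> (forall x, B x -> ~ I x) ->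
     forall x, B x -> A x) ->
  prime_filter A.
Proof.
move=> filA [I0 downI jI] disjAI maxA; have [A1 upA mA] := filA.
have adjoin_meets_I a : ~ A a -> exists2 y, A y & I (meet y a).
  move=> nAa; apply: NNPP => nI; apply: nAa; apply: (maxA (filter_adjoin A a)).
  - exact: filter_adjoin_filter.
  - by move=> x Ax; exists x => //; apply: (leIl hB).
  - by move=> x [y Ay le_yx] Ix; apply: nI; exists y => //; apply: downI Ix le_yx.
  - by exists (one L n) => //; apply: (leIr hB).
split=> //.
- by exists (zero L n) => A0; apply: disjAI A0 I0.
- by exists (one L n).
move=> a b Aab; apply: NNPP => nab.
have [y Ay Iya] := adjoin_meets_I a (fun Aa => nab (or_introl Aa)).
have [z Az Izb] := adjoin_meets_I b (fun Ab => nab (or_intror Ab)).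
apply: (disjAI (meet (meet y z) (join a b))); first exact: mA (mA _ _ Ay Az) Aab.
apply: downI (jI _ _ Iya Izb) _; rewrite (meetUr hB).
by apply: (leU2 hB); apply: (leI2 hB _ (le_refl hB _)); [apply: (leIl hB) | apply: (leIr hB)].
Qed.

Theorem prime_filter_separation n (H I : car L n -> Prop) :
  is_filter H -> is_ideal I -> (forall x, H x -> ~ I x) ->
  exists G, [/\ prime_filter G, (forall x, H x -> G x) & forall x, G x -> ~ I x].
Proof.
move=> filH idI disjHI.
have [A [filA HA disjA maxA]] := exists_maximal_filter filH disjHI.
by exists A; split=> //; exact: maximal_filter_prime filA idI disjA maxA.
Qed.

End PrimeFilterTheorem.

Lemma le_subst (L : MAlg) (hS : subst_axioms L) p q (b : 'I_p -> 'I_q) (x y : car L p) :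
  le x y -> le (subst b x) (subst b y).
Proof. by have [_ _ _ substI] := hS _ _ b; rewrite /le => exy; rewrite -substI -exy. Qed.

Section ImageFilter.
Variables (L : MAlg) (hB : bdl_axioms L) (hS : subst_axioms L).
Variables (m : nat) (k : 'I_m -> nat) (n : nat) (a : forall i, 'I_(k i) -> 'I_n).
Arguments a : clear implicits.

Definition image_filter (F : forall i, car L (k i) -> Prop) (x : car L n) :=
  exists2 r : forall i, car L (k i), forall i, F i (r i) &
    le (\big[@meet L n/one L n]_(i < m) subst (a i) (r i)) x.

Definition image_ideal (I : forall i, car L (k i) -> Prop) (x : car L n) :=
  exists2 s : forall i, car L (k i), forall i, I i (s i) &
    le x (\big[@join L n/zero L n]_(i < m) subst (a i) (s i)).

Lemma image_filter_filter F :
  (forall i, is_filter (F i)) -> is_filter (image_filter F).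
Proof.
move=> filF; split.
- exists (fun i => one L (k i)); first by move=> i; have [] := filF i.
  exact: (lex1 hB).
- by move=> x y [r Fr le_rx] le_xy; exists r => //; apply: (le_trans hB le_rx le_xy).
- move=> x y [r Fr le_rx] [r' Fr' le_ry]; exists (fun i => meet (r i) (r' i)).
    by move=> i; have [_ _ mF] := filF i; apply: mF.
  apply: (lexI hB).
    apply: (le_trans hB _ le_rx); apply: (le_bigmeet hB) => // i.
    by apply: (le_subst hS); apply: (leIl hB).
  apply: (le_trans hB _ le_ry); apply: (le_bigmeet hB) => // i.
  by apply: (le_subst hS); apply: (leIr hB).
Qed.

Lemma image_ideal_ideal I :
  (forall i, is_ideal (I i)) -> is_ideal (image_ideal I).
Proof.
move=> idI; split.
- exists (fun i => zero L (k i)); first by move=> i; have [] := idI i.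
  exact: (le0x hB).
- by move=> x y [s Is le_ys] le_xy; exists s => //; apply: (le_trans hB le_xy le_ys).
- move=> x y [s Is le_xs] [s' Is' le_ys]; exists (fun i => join (s i) (s' i)).
    by move=> i; have [_ _ jI] := idI i; apply: jI.
  apply: (leUx hB).
    apply: (le_trans hB le_xs _); apply: (le_bigjoin hB) => // i.
    by apply: (le_subst hS); apply: (leUl hB).
  apply: (le_trans hB le_ys _); apply: (le_bigjoin hB) => // i.
  by apply: (le_subst hS); apply: (leUr hB).
Qed.

Lemma image_filter_subst F i r :
  (forall j, is_filter (F j)) -> F i r -> image_filter F (subst (a i) r).
Proof.
move=> filF Fr; pose t := dfwith (fun j => one L (k j)) r.
exists t.
  move=> j; rewrite /t; case: (eqVneq i j) => [<-|ne_ij]; first by rewrite dfwith_in.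
  by rewrite dfwith_out //; have [] := filF j.
by have := bigmeet_inf hB (fun j => subst (a j) (t j)) i; rewrite /t dfwith_in.
Qed.

Lemma image_ideal_subst I i r :
  (forall j, is_ideal (I j)) -> I i r -> image_ideal I (subst (a i) r).
Proof.
move=> idI Ir; pose t := dfwith (fun j => zero L (k j)) r.
exists t.
  move=> j; rewrite /t; case: (eqVneq i j) => [<-|ne_ij]; first by rewrite dfwith_in.
  by rewrite dfwith_out //; have [] := idI j.
by have := bigjoin_sup hB (fun j => subst (a j) (t j)) i; rewrite /t dfwith_in.
Qed.

End ImageFilter.

Lemma cyl_image_filter_ideal_disjoint (L : MAlg) (hB : bdl_axioms L) (h0 : axiom0 L)
    m (k : 'I_m -> nat) (F I : forall i, car L (k i) -> Prop) :
  (forall i, is_filter (F i)) -> (forall i x, F i x -> ~ I i x) ->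
  forall x, image_filter (@cyl m k) F x -> ~ image_ideal (@cyl m k) I x.
Proof.
move=> filF disjFI x [r Fr le_rx] [s Is le_xs].
have [i le_rs] := h0 m k r s (le_trans hB le_rx le_xs).
have [_ upF _] := filF i.
exact: disjFI (upF _ _ (Fr i) le_rs) (Is i).
Qed.

Theorem lemma3p5 (L : MAlg) (HL : axioms L)
  (m : nat) (k : 'I_m -> nat)
  (F : forall i : 'I_m, car L (k i) -> Prop)
  (HF : forall i : 'I_m, prime_filter (F i)) :
  exists G : car L (\sum_(j < m) k j) -> Prop,
    prime_filter G /\
    (forall (i : 'I_m) (r : car L (k i)), G (@subst L _ _ (@cyl m k i) r) <-> F i r).
Proof.
have [h0 hB hS] := HL.
have filF i : is_filter (F i) by apply: prime_filter_filter.
have idnF i : is_ideal (fun x => ~ F i x) by apply: prime_filter_compl_ideal.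
have [G [primeG HG disjG]] := prime_filter_separation hB
  (image_filter_filter hB hS (@cyl m k) filF)
  (image_ideal_ideal hB hS (@cyl m k) idnF)
  (cyl_image_filter_ideal_disjoint hB h0 filF (fun i x Fx nFx => nFx Fx)).
exists G; split=> // i r; split=> [Gr|Fr]; last by apply: HG; apply: image_filter_subst.
by apply: NNPP => nFr; apply: disjG Gr _; apply: image_ideal_subst.
Qed.
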